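(* Let $V=I_F/I_F^2$ and let $R^{q}\subseteq V\otimes V$ be the kernel of the composite $m_K:V\otimes V\xrightarrow{m_F}I_F^2/I_F^3\twoheadrightarrow I_K^2/I_K^3$, where $m_F$ is the isomorphism induced by multiplication in $F$ and the second map is induced by the projection $F\to K$. Then $R^q\cong(M+I_F^3)/I_F^3\cong\partial_A(\mathbb{Q}Y_F)$, where $\partial_A(\mathbb{Q}Y_F)\subseteq\tilde X^2\cong I_F^2/I_F^3$.
   Context: Let $K$ be an augmented unital $\mathbb{Q}$-algebra generated by a set $X$, $F$ the free unital $\mathbb{Q}$-algebra on $X$, and $I_F\subseteq F$, $I_K\subseteq K$ the kernels of the algebra maps sending each $x\in X$ to $1$. Let $\tilde X=\mathbb{Q}\{x-1:x\in X\}$, so $F=T\tilde X=\bigoplus_p\tilde X^p$ and $I_F^p=\bigoplus_{q\ge p}\tilde X^q$. Let $M\subseteq I_F$ be a two-sided ideal with $K=F/M$. $K$ and $F$ are taken completed with respect to powers of their augmentation ideals, and $M\subseteq I_F^2$ is assumed (so $I_K/I_K^2\cong I_F/I_F^2$). Let $\{y_q:q\in Q\}\subseteq I_F^2$ generate $M$ as a two-sided ideal, $Y_F=\{Y_q\}$ symbols in bijection with them, and $\partial_A:\mathbb{Q}Y_F\to\tilde X^2$ the linear map sending $Y_q$ to the degree-2 component of $y_q$ (i.e. $y_q \bmod I_F^3$). *)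

From Stdlib Require List.
From mathcomp Require Import all_boot all_algebra.
Set Implicit Arguments. Unset Strict Implicit. Unset Printing Implicit Defensive.
Import GRing.Theory.
Local Open Scope ring_scope.

(* The completed free algebra F on X, written in the variables t_x = x - 1:
   an element is a noncommutative power series  sum_w f(w) t_w,  w a word
   over X; the degree-p homogeneous part lies in the tensor power
   tilde X^p, i.e. it has finite support (predicate [in_F]). *)
Definition series (X : Type) := seq X -> rat.

Definition in_F (X : Type) (f : series X) : Prop :=
  forall n : nat, exists s : seq (seq X),
    forall w : seq X, size w = n -> f w <> 0 -> Stdlib.Lists.List.In w s.

Definition in_IFp (X : Type) (p : nat) (f : series X) : Prop :=
  forall w : seq X, (size w < p)%N -> f w = 0.

Definition subF (X : Type) (f g : series X) : series X := fun w => f w - g w.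

Definition mulF (X : Type) (f g : series X) : series X :=
  fun w => \sum_(i < (size w).+1) f (take i w) * g (drop i w).

Definition ideal_gen_alg (X Q : Type) (y : Q -> series X) (f : series X) : Prop :=
  exists l : seq (series X * Q * series X),
    (forall u, Stdlib.Lists.List.In u l -> in_F u.1.1 /\ in_F u.2) /\
    forall w, f w = \sum_(u <- l) mulF (mulF u.1.1 (y u.1.2)) u.2 w.

(* M : the (closed) two-sided ideal of the completed algebra F generated by
   the y_q, i.e. the closure of the algebraic ideal in the I_F-adic topology *)
Definition ideal_M (X Q : Type) (y : Q -> series X) (f : series X) : Prop :=
  in_F f /\ forall n : nat, exists g, ideal_gen_alg y g /\
    forall w : seq X, (size w < n)%N -> f w = g w.

Definition in_M_IF3 (X Q : Type) (y : Q -> series X) (f : series X) : Prop :=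
  exists m, ideal_M y m /\ in_IFp 3 (subF f m).

(* V (x) V, with V = I_F/I_F^2 having basis the classes of t_x (x in X):
   a tensor sum_{a,b} t(a,b) t_a (x) t_b with finite support. *)
Definition tensorVV (X : Type) := X -> X -> rat.

Definition fin_supp (X : Type) (t : tensorVV X) : Prop :=
  exists s : seq X, forall a b, t a b <> 0 -> Stdlib.Lists.List.In a s /\ Stdlib.Lists.List.In b s.

(* m_F : V (x) V -> I_F^2/I_F^3, [t_a] (x) [t_b] |-> [t_a t_b]; we give the
   canonical lift in I_F^2 (the homogeneous degree-2 series). *)
Definition mF (X : Type) (t : tensorVV X) : series X :=
  fun w => match w with [:: a; b] => t a b | _ => 0 end.

(* R^q = ker (m_K) : the image of m_F t in K = F/M lies in I_K^3 = pi(I_F^3),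
   i.e. m_F t = g mod M for some g in I_F^3. *)
Definition in_Rq (X Q : Type) (y : Q -> series X) (t : tensorVV X) : Prop :=
  exists g : series X, in_F g /\ in_IFp 3 g /\ ideal_M y (subF (mF t) g).

(* degree-2 component (an element of tilde X^2 = I_F^2/I_F^3) *)
Definition deg2 (X : Type) (f : series X) : X -> X -> rat :=
  fun a b => f [:: a; b].

Definition partialA (X Q : Type) (y : Q -> series X) (c : seq (Q * rat)) :
  X -> X -> rat :=
  fun a b => \sum_(u <- c) u.2 * deg2 (y u.1) a b.

From mathcomp Require Import all_boot all_algebra.
From Stdlib Require Import FunctionalExtensionality.
Set Implicit Arguments.
Import GRing.Theory.
Local Open Scope ring_scope.

(* Since every y_q lies in I_F^2, the degree-2 part of a product a y_q b is
   a(1) (y_q)_2 b(1), where a(1), b(1) are the constant terms.  Hence modulo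
   I_F^3 the closed ideal M is spanned by the degree-2 parts of the y_q, i.e.
   by partial_A(Q Y_F); conversely every rational combination of the y_q lies
   in M.  As m_F identifies V (x) V with the homogeneous series of degree 2,
   R^q is exactly the preimage of (M + I_F^3)/I_F^3 under m_F. *)

Section Series.
Variable X : Type.
Implicit Types (f g h : series X) (t : tensorVV X).

Definition const_series (k : rat) : series X :=
  fun w => if size w == 0%N then k else 0.

Definition lin_comb (I : Type) (z : I -> series X) (c : seq (I * rat)) : series X :=
  fun w => \sum_(u <- c) u.2 * z u.1 w.

Lemma subFK f g : subF f (subF f g) = g.
Proof. by apply: functional_extensionality => w; rewrite /subF opprB addrC subrK. Qed.

Lemma in_F_subF f g : in_F f -> in_F g -> in_F (subF f g).
Proof.
move=> Ff Fg n; have [s1 H1] := Ff n; have [s2 H2] := Fg n.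
exists (s1 ++ s2)%list => w Hw fg_w; apply: List.in_or_app.
have [f_w|f_w] := eqVneq (f w) 0; last by left; apply: H1 => //; apply/eqP.
by right; apply: H2 => // g_w; apply: fg_w; rewrite /subF f_w g_w subr0.
Qed.

Lemma in_F_add_scale k f g : in_F f -> in_F g -> in_F (fun w => k * f w + g w).
Proof.
move=> Ff Fg n; have [s1 H1] := Ff n; have [s2 H2] := Fg n.
exists (s1 ++ s2)%list => w Hw fg_w; apply: List.in_or_app.
have [f_w|f_w] := eqVneq (f w) 0; last by left; apply: H1 => //; apply/eqP.
by right; apply: H2 => // g_w; apply: fg_w; rewrite f_w g_w mulr0 addr0.
Qed.

Lemma in_F_lin_comb (I : Type) (z : I -> series X) c :
  (forall i, in_F (z i)) -> in_F (lin_comb z c).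
Proof.
move=> Fz; elim: c => [|u c IH].
  by move=> n; exists nil => w _; rewrite /lin_comb big_nil.
have := in_F_add_scale u.2 (Fz u.1) IH.
by congr in_F; apply: functional_extensionality => w; rewrite /lin_comb big_cons.
Qed.

Lemma in_F_const k : in_F (const_series k).
Proof. by move=> n; exists [:: [::]]%list => -[|a w] _ //=; left. Qed.

Lemma in_F_mF t : fin_supp t -> in_F (mF t).
Proof.
case=> s supp_t n; exists (List.map (fun p => [:: p.1; p.2]) (List.list_prod s s)) => w _.
case: w => [|a [|b [|? ?]]] //= t_ab; have [sa sb] := supp_t a b t_ab.
by apply: (List.in_map (fun p => [:: p.1; p.2]) _ (a, b)); apply: List.in_prod.
Qed.

Lemma fin_supp_deg2 f : in_F f -> fin_supp (deg2 f).
Proof.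
move=> Ff; have [s Hs] := Ff 2%N; exists (List.concat s) => a b f_ab.
have s_ab := Hs [:: a; b] erefl f_ab.
by split; apply/List.in_concat; exists [:: a; b]; split => //=; auto.
Qed.

Lemma in_IFp_subFC p f g : in_IFp p (subF f g) -> in_IFp p (subF g f).
Proof. by move=> Hfg w Hw; move: (Hfg w Hw); rewrite /subF => fg; rewrite -opprB fg oppr0. Qed.

Lemma in_IFp_subF_trans p f g h :
  in_IFp p (subF f g) -> in_IFp p (subF g h) -> in_IFp p (subF f h).
Proof.
move=> Hfg Hgh w Hw; move: (Hfg w Hw) (Hgh w Hw); rewrite /subF => fg gh.
by rewrite -(subrK (g w) (f w)) fg add0r -(subrK (h w) (g w)) gh add0r subrr.
Qed.

Lemma in_IFp_mulFl p f g : in_IFp p f -> in_IFp p (mulF f g).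
Proof.
move=> Ff w Hw; rewrite /mulF big1 // => i _; rewrite Ff ?mul0r //.
by rewrite size_take; case: ifP => // /ltnW /leq_ltn_trans; apply.
Qed.

Lemma in_IFp_mulFr p f g : in_IFp p g -> in_IFp p (mulF f g).
Proof.
move=> Fg w Hw; rewrite /mulF big1 // => i _; rewrite Fg ?mulr0 //.
by rewrite size_drop; apply: leq_ltn_trans Hw; apply: leq_subr.
Qed.

Lemma in_IFp_lin_comb p (I : Type) (z : I -> series X) c :
  (forall i, in_IFp p (z i)) -> in_IFp p (lin_comb z c).
Proof. by move=> Fz w Hw; rewrite /lin_comb big1 // => u _; rewrite Fz ?mulr0. Qed.

Lemma in_IFp2_mF t : in_IFp 2 (mF t).
Proof. by case=> [|a [|b w]]. Qed.

Lemma mulF_constl k f w : mulF (const_series k) f w = k * f w.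
Proof.
rewrite /mulF big_ord_recl /= take0 drop0 big1 ?addr0 // => i _.
have /negbTE w_nil : size w != 0%N by rewrite -lt0n; apply: leq_ltn_trans (ltn_ord i).
by rewrite /const_series size_take /bump leq0n add1n; case: ltnP; rewrite ?w_nil mul0r.
Qed.

Lemma mulF_constr k f w : mulF f (const_series k) w = f w * k.
Proof.
rewrite /mulF big_ord_recr /= take_size drop_size big1 ?add0r // => i _.
by rewrite /const_series size_drop subn_eq0 leqNgt ltn_ord mulr0.
Qed.

Lemma deg2_mulF_mulF a h b x1 x2 : in_IFp 2 h ->
  deg2 (mulF (mulF a h) b) x1 x2 = a [::] * deg2 h x1 x2 * b [::].
Proof.
move=> Fh; rewrite /deg2 /mulF /= !big_ord_recl !big_ord0 /=.
by rewrite !(Fh [::], Fh [:: x1], Fh [:: x2]) // !(mulr0, mul0r, addr0, add0r).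
Qed.

Lemma deg2_eq_of_IF3 f g a b : in_IFp 3 (subF f g) -> deg2 f a b = deg2 g a b.
Proof. by move=> Hfg; apply/eqP; rewrite -subr_eq0; apply/eqP/(Hfg [:: a; b]). Qed.

Lemma in_IFp3_of_deg2 f g : in_IFp 2 f -> in_IFp 2 g ->
  (forall a b, deg2 f a b = deg2 g a b) -> in_IFp 3 (subF f g).
Proof.
move=> Ff Fg fg; rewrite /subF => -[|a [|b [|? ?]]] //= _.
- by rewrite Ff ?Fg ?subrr.
- by rewrite Ff ?Fg ?subrr.
- by rewrite [f _]fg subrr.
Qed.

End Series.

Section ClosedIdeal.
Variables (X Q : Type) (y : Q -> series X).
Implicit Types (f m : series X).

Lemma ideal_M_in_IFp p m : (forall q, in_IFp p (y q)) -> ideal_M y m -> in_IFp p m.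
Proof.
move=> Fy [_ approx] w Hw; have [g [[l [_ def_g]] mg]] := approx p.
rewrite mg // def_g big1 // => u _.
exact: in_IFp_mulFl _ (in_IFp_mulFr _ (Fy _)) _ Hw.
Qed.

Lemma in_M_IF3_in_IFp2 f : (forall q, in_IFp 2 (y q)) -> in_M_IF3 y f -> in_IFp 2 f.
Proof.
move=> Fy [m [Mm fm]] w Hw.
by have := fm w (ltnW Hw); rewrite /subF (ideal_M_in_IFp Fy Mm) // subr0.
Qed.

(* Modulo I_F^3, [m] agrees with an element of the algebraic ideal generated by the y_q. *)
Lemma deg2_ideal_M m : (forall q, in_IFp 2 (y q)) -> ideal_M y m ->
  exists c, forall a b, deg2 m a b = partialA y c a b.
Proof.
move=> Fy [_ approx]; have [g [[l [_ def_g]] mg]] := approx 3%N.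
exists (map (fun u => (u.1.2, u.1.1 [::] * u.2 [::])) l) => a b.
rewrite /deg2 mg // def_g /partialA big_map; apply: eq_bigr => u _.
by have := deg2_mulF_mulF u.1.1 u.2 a b (Fy u.1.2); rewrite /deg2 /= => ->; rewrite mulrAC.
Qed.

Lemma ideal_M_lin_comb c : (forall q, in_F (y q)) -> ideal_M y (lin_comb y c).
Proof.
move=> Fy; split; first exact: in_F_lin_comb.
move=> n; exists (lin_comb y c); split => //.
exists (map (fun u => (const_series u.2, u.1, const_series 1)) c); split.
  by move=> u /List.in_map_iff [v [<- _]]; split; apply: in_F_const.
move=> w; rewrite /lin_comb big_map; apply: eq_bigr => u _.
by rewrite mulF_constr mulr1 mulF_constl.
Qed.

Lemma in_Rq_iff_M_IF3 t : fin_supp t -> in_Rq y t <-> in_M_IF3 y (mF t).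
Proof.
move=> ft; split=> [[g [Fg [g3 Mg]]] | [m [Mm tm]]].
  by exists (subF (mF t) g); rewrite subFK.
exists (subF (mF t) m); rewrite subFK; split=> //.
exact: in_F_subF (in_F_mF ft) Mm.1.
Qed.

End ClosedIdeal.

Unset Implicit Arguments.

Theorem lemma3p3 (X Q : Type) (y : Q -> series X)
  (hyF : forall q, in_F (y q)) (hy2 : forall q, in_IFp 2 (y q)) :
  (forall t : tensorVV X, fin_supp t -> (in_Rq y t <-> in_M_IF3 y (mF t)))
  /\
  (forall f : series X, in_F f ->
     (in_M_IF3 y f <->
      exists t : tensorVV X, fin_supp t /\ in_Rq y t /\ in_IFp 3 (subF f (mF t))))
  /\
  (forall f : series X, in_F f ->
     (in_M_IF3 y f <->
      in_IFp 2 f /\ exists c : seq (Q * rat), forall a b, deg2 f a b = partialA y c a b)).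
Proof.
split; first exact: in_Rq_iff_M_IF3.
split=> f Ff; split.
- move=> Mf; have f2 := in_M_IF3_in_IFp2 hy2 Mf; have ft := fin_supp_deg2 Ff.
  have f_t : in_IFp 3 (subF f (mF (deg2 f))) by apply: in_IFp3_of_deg2 (in_IFp2_mF _) _.
  exists (deg2 f); do 2!split=> //; apply/in_Rq_iff_M_IF3 => //.
  case: Mf => m [Mm fm]; exists m; split=> //.
  exact: in_IFp_subF_trans (in_IFp_subFC f_t) fm.
- case=> t [ft [/(in_Rq_iff_M_IF3 y ft) [m [Mm tm]] f_t]].
  by exists m; split=> //; apply: in_IFp_subF_trans f_t tm.
- move=> Mf; split; first exact: in_M_IF3_in_IFp2 hy2 Mf.
  case: Mf => m [Mm fm]; have [c m_c] := deg2_ideal_M hy2 Mm.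
  by exists c => a b; rewrite (deg2_eq_of_IF3 _ _ fm).
- case=> f2 [c f_c]; exists (lin_comb y c); split; first exact: ideal_M_lin_comb.
  by apply: in_IFp3_of_deg2 f2 (in_IFp_lin_comb y c hy2) _ => a b; apply: f_c.
Qed.
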